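(* Let $(X,\to,d_A)$ be a finitely branching metric transition system over $A$. Then $\mathit{lo}_S$ is $c_S$-compatible, i.e. $\mathit{lo}_S(c_S(\mathcal F))\subseteq c_S(\mathit{lo}_S(\mathcal F))$ for every $\mathcal F\subseteq[0,1]^X$.
   Context: A metric transition system: $(X,\to,d_A)$ with $\to\subseteq X\times A\times X$ and a metric $d_A\colon A\times A\to[0,1]$; finitely branching: each $\{(a,x')\mid x\xrightarrow{a}x'\}$ is finite. $r\oplus s=\min\{r+s,1\}$, $r\ominus s=\max\{0,r-s\}$. $\bigcirc_cf(x)=\bigvee\{(1-d_A(b,c))\land f(x')\mid x\xrightarrow{b}x'\}$ (empty join $=0$). $\mathit{lo}_S(\mathcal F)=\bigcup_{c\in A}\{\bigcirc_cf\mid f\in\mathrm{cl}^{\land,\mathrm{sh}}_f(\mathcal F)\}$, where $\mathrm{cl}^{\land,\mathrm{sh}}_f$ closes under finite pointwise meets (empty meet = constant 1) and constant shifts $f\mapsto f\ominus r$, $f\mapsto f\oplus r$, $r\in[0,1]$. $\alpha_S(\mathcal F)(x_1,x_2)=\bigvee_{f\in\mathcal F}(f(x_1)\ominus f(x_2))$, $\gamma_S(d)=\{f\mid\forall x_1,x_2\colon f(x_1)\ominus f(x_2)\le d(x_1,x_2)\}$ for directed pseudo-metrics $d$ on $X$, $c_S=\gamma_S\circ\alpha_S$. *)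

From HB Require Import structures.
From mathcomp Require Import all_boot all_order all_algebra.
From mathcomp Require Import boolp classical_sets cardinality reals.
Set Implicit Arguments. Unset Strict Implicit. Unset Printing Implicit Defensive.
Import Order.TTheory GRing.Theory Num.Theory.
Local Open Scope ring_scope.
Local Open Scope classical_set_scope.

Section Defs.
Variables (R : realType) (X A : Type).

Definition oplus (r s : R) : R := Num.min (r + s) 1.
Definition ominus (r s : R) : R := Num.max (r - s) 0.

(* join of a subset of [0,1]; the empty join is 0 *)
Definition join01 (S : set R) : R := sup ([set 0] `|` S).

Definition in01 (r : R) : Prop := 0 <= r <= 1.
Definition fun01 (f : X -> R) : Prop := forall x, in01 (f x).

Definition label_metric (dA : A -> A -> R) : Prop :=
  (forall a b, in01 (dA a b)) /\
  (forall a, dA a a = 0) /\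
  (forall a b, dA a b = 0 -> a = b) /\
  (forall a b, dA a b = dA b a) /\
  (forall a b c, dA a c <= dA a b + dA b c).

Definition fin_branching (tr : X -> A -> X -> Prop) : Prop :=
  forall x, finite_set [set ax : A * X | tr x ax.1 ax.2].

Definition next (tr : X -> A -> X -> Prop) (dA : A -> A -> R) (c : A)
  (f : X -> R) : X -> R :=
  fun x => join01 [set v | exists b x', tr x b x' /\
                                v = Num.min (1 - dA b c) (f x')].

(* closure under finite pointwise meets (empty meet = constant 1) and
   constant shifts f (-) r, f (+) r, r in [0,1] *)
Inductive cl_meet_shift (F : set (X -> R)) : (X -> R) -> Prop :=
| cl_base f : F f -> cl_meet_shift F f
| cl_top : cl_meet_shift F (fun _ => 1)
| cl_meet f g : cl_meet_shift F f -> cl_meet_shift F g ->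
    cl_meet_shift F (fun x => Num.min (f x) (g x))
| cl_shminus f r : in01 r -> cl_meet_shift F f ->
    cl_meet_shift F (fun x => ominus (f x) r)
| cl_shplus f r : in01 r -> cl_meet_shift F f ->
    cl_meet_shift F (fun x => oplus (f x) r).

Definition loS tr dA (F : set (X -> R)) : set (X -> R) :=
  [set h | exists c f, cl_meet_shift F f /\ h = next tr dA c f].

Definition alphaS (F : set (X -> R)) : X -> X -> R :=
  fun x1 x2 => join01 [set v | exists f, F f /\ v = ominus (f x1) (f x2)].

Definition gammaS (d : X -> X -> R) : set (X -> R) :=
  [set f | fun01 f /\ forall x1 x2, ominus (f x1) (f x2) <= d x1 x2].

Definition cS (F : set (X -> R)) : set (X -> R) := gammaS (alphaS F).

End Defs.

From Pilot Require Import Defs.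
From mathcomp Require Import all_boot all_order all_algebra.
From mathcomp Require Import boolp classical_sets cardinality reals.
From mathcomp Require Import lra.
Local Open Scope ring_scope.
Local Open Scope classical_set_scope.
Set Implicit Arguments.
Unset Strict Implicit.
Unset Printing Implicit Defensive.
Import Order.TTheory GRing.Theory Num.Theory.

(* A member g of the meet/shift closure of c_S(F) is still non-expansive for
   alpha_S(F). To bound ○_c g x1 - ○_c g x2, pick a move x1 -b-> y nearly
   realising ○_c g x1 and let δ be its excess over ○_c g x2. Each move
   x2 -a-> z either has a label far from b (triangle inequality for d_A) or
   satisfies g y - g z >= δ; then some f in F separates y from z by almost δ,
   and f shifted up to take the value 1 at y stays below 1 - δ + ε at z.
   The meet φ of these finitely many shifts gives ○_b φ x1 = 1 and
   ○_b φ x2 <= 1 - δ + ε, so ○_b φ in lo_S(F) separates x1 from x2 by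
   almost δ. *)

Ltac minmax_lra := rewrite /ominus /oplus; repeat (
  repeat match goal with
  | H : context[Num.min _ _] |- _ => revert H
  | H : context[Num.max _ _] |- _ => revert H end;
  match goal with
  | |- context[Num.min ?a ?b] => case: (leP a b)
  | |- context[Num.max ?a ?b] => case: (leP a b)
  end; intros); lra.

Section Join.
Variable R : realType.
Implicit Types (S : set R) (r v M : R).

Lemma join01_ge0 S : 0 <= join01 S.
Proof.
rewrite /join01; have [supS|/sup_out->//] := pselect (has_sup ([set 0] `|` S)).
by apply: sup_upper_bound supS _ _; left.
Qed.

Lemma le_join01 S M v : ubound S M -> S v -> v <= join01 S.
Proof.
move=> SM Sv; apply: ub_le_sup; last by right.
by exists (Num.max 0 M) => w [->|/SM wM]; rewrite le_max ?lexx ?wM ?orbT.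
Qed.

Lemma join01_le S M : ubound S M -> 0 <= M -> join01 S <= M.
Proof.
by move=> SM M0; apply: ge_sup; [exists 0; left | move=> w [->|/SM]].
Qed.

Lemma join01_gt S r : 0 <= r -> r < join01 S -> exists2 v, S v & r < v.
Proof.
move=> r0 /sup_gt[]; first by exists 0; left.
by move=> v [->|Sv] rv; [rewrite ltNge r0 in rv | exists v].
Qed.

End Join.

Section TruncatedArithmetic.
Variable R : realType.
Implicit Types a b c d r : R.

Lemma in01_min a b : in01 a -> in01 b -> in01 (Num.min a b).
Proof. by move=> /andP[? ?] /andP[? ?]; apply/andP; split; minmax_lra. Qed.

Lemma in01_ominus a r : in01 a -> in01 r -> in01 (ominus a r).
Proof. by move=> /andP[? ?] /andP[? ?]; apply/andP; split; minmax_lra. Qed.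

Lemma in01_oplus a r : in01 a -> in01 r -> in01 (oplus a r).
Proof. by move=> /andP[? ?] /andP[? ?]; apply/andP; split; minmax_lra. Qed.

Lemma ominus_min a b c d :
  ominus (Num.min a b) (Num.min c d) <= Num.max (ominus a c) (ominus b d).
Proof. minmax_lra. Qed.

Lemma ominus_ominus a c r : ominus (ominus a r) (ominus c r) <= ominus a c.
Proof. minmax_lra. Qed.

Lemma ominus_oplus a c r : ominus (oplus a r) (oplus c r) <= ominus a c.
Proof. minmax_lra. Qed.

Lemma ominus_le1 a b : a <= 1 -> 0 <= b -> ominus a b <= 1.
Proof. move=> *; minmax_lra. Qed.

Lemma ominus_ge a b : a - b <= ominus a b.
Proof. by rewrite /ominus le_max lexx. Qed.

Lemma ominus_gt r a b : 0 <= r -> r < ominus a b -> r < a - b.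
Proof. move=> r0; minmax_lra. Qed.

End TruncatedArithmetic.

Section MeetShiftClosure.
Variables (R : realType) (X : Type).
Implicit Types (F G : set (X -> R)) (d : X -> X -> R).

Lemma gammaS_cl_meet_shift d : (forall x1 x2, 0 <= d x1 x2) ->
  cl_meet_shift (gammaS d) `<=` gammaS d.
Proof.
move=> d0 g; elim=> {g} [f //| |f g _ [f01 fd] _ [g01 gd]
                       |f r r01 _ [f01 fd]|f r r01 _ [f01 fd]].
- split=> [x|x1 x2]; first by rewrite /in01 ler01 lexx.
  by rewrite /ominus subrr maxxx d0.
- split=> [x|x1 x2]; first exact: in01_min.
  by apply: le_trans (ominus_min _ _ _ _) _; rewrite ge_max fd gd.
- split=> [x|x1 x2]; first exact: in01_ominus.
  exact: le_trans (ominus_ominus _ _ _) (fd _ _).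
- split=> [x|x1 x2]; first exact: in01_oplus.
  exact: le_trans (ominus_oplus _ _ _) (fd _ _).
Qed.

Lemma cl_meet_shift_finite_meet (T : Type) G (S : set T) (phi : T -> X -> R) y :
  finite_set S -> (forall t, S t -> cl_meet_shift G (phi t) /\ phi t y = 1) ->
  exists psi, [/\ cl_meet_shift G psi, psi y = 1
                & forall t x, S t -> psi x <= phi t x].
Proof.
move=> /(finite_seqP (T := {classic T})) [s ->] {S}.
elim: s => [|t s IH] phiP.
  by exists (fun=> 1); split=> //; exact: cl_top.
have [u su|psi [Cpsi psiy psi_le]] := IH.
  by apply: phiP; rewrite /= in_cons su orbT.
have [Ct ty] := phiP t (mem_head _ _).
exists (fun x => Num.min (phi t x) (psi x)); split; first exact: cl_meet.
  by rewrite ty psiy minxx.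
move=> u x /=; rewrite in_cons => /orP[/eqP->|su]; rewrite ge_min ?lexx //.
by rewrite psi_le ?orbT.
Qed.

Lemma le_alphaS F f y z : (forall f, F f -> fun01 f) -> F f ->
  ominus (f y) (f z) <= alphaS F y z.
Proof.
move=> F01 Ff; apply: (le_join01 (M := 1)); last by exists f.
move=> _ [h [/F01 h01 ->]]; apply: ominus_le1.
  by case/andP: (h01 y).
by case/andP: (h01 z).
Qed.

Lemma alphaS_gt F y z r : 0 <= r -> r < alphaS F y z ->
  exists2 f, F f & r < f y - f z.
Proof.
by move=> r0 /(join01_gt r0) [_ [f [Ff ->]] /(ominus_gt r0)]; exists f.
Qed.

End MeetShiftClosure.

Section Modality.
Variables (R : realType) (X A : Type).
Variables (tr : X -> A -> X -> Prop) (dA : A -> A -> R).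
Hypothesis dA_metric : label_metric dA.

Lemma dA_ge0 a b : 0 <= dA a b.
Proof. by case: dA_metric => /(_ a b) /andP[]. Qed.

Lemma next_ubound c (f : X -> R) x :
  ubound [set v | exists b x', tr x b x' /\ v = Num.min (1 - dA b c) (f x')] 1.
Proof.
move=> _ [b [x' [_ ->]]]; rewrite ge_min; apply/orP; left.
by rewrite lerBlDr lerDl dA_ge0.
Qed.

Lemma le_next c f x b x' : tr x b x' ->
  Num.min (1 - dA b c) (f x') <= Defs.next tr dA c f x.
Proof.
by move=> trx; apply: (le_join01 (@next_ubound c f x)); exists b, x'.
Qed.

Lemma next_le c f x M : 0 <= M ->
  (forall b x', tr x b x' -> Num.min (1 - dA b c) (f x') <= M) ->
  Defs.next tr dA c f x <= M.
Proof. by move=> M0 fM; apply: join01_le M0 => _ [b [x' [/fM fM' ->]]]. Qed.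

Lemma next_gt c f x r : 0 <= r -> r < Defs.next tr dA c f x ->
  exists b x', tr x b x' /\ r < Num.min (1 - dA b c) (f x').
Proof. by move=> r0 /(join01_gt r0) [_ [b [x' [trx ->]]] rv]; exists b, x'. Qed.

Lemma next_fun01 c f : fun01 (Defs.next tr dA c f).
Proof.
move=> x; apply/andP; split; first exact: join01_ge0.
exact: join01_le (@next_ubound c f x) ler01.
Qed.

Lemma loS_fun01 F : loS tr dA F `<=` @fun01 R X.
Proof. by move=> _ [c [f [_ ->]]]; exact: next_fun01. Qed.

Variable F : set (X -> R).
Hypothesis F01 : forall f, F f -> fun01 f.
Variable g : X -> R.
Hypothesis g_nonexpansive : forall y z, ominus (g y) (g z) <= alphaS F y z.

Lemma separating_step (a b c : A) (y z : X) (v n e : R) :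
  v <= Num.min (1 - dA b c) (g y) -> Num.min (1 - dA a c) (g z) <= n -> 0 < e ->
  exists phi, [/\ cl_meet_shift F phi, phi y = 1
                & Num.min (1 - dA a b) (phi z) <= 1 - (v - n - e)].
Proof.
move=> vle zle e0; have [r_lt0|r_ge0] := ltP (v - n - e) 0.
  exists (fun=> 1); split=> //; first exact: cl_top.
  by rewrite ge_min; apply/orP; right; lra.
move: vle; rewrite le_min => /andP[vb vg].
move: zle; rewrite ge_min => /orP[ac_le|gz_le].
  exists (fun=> 1); split=> //; first exact: cl_top.
  have triangle := dA_metric.2.2.2.2 a b c.
  by rewrite ge_min; apply/orP; left; lra.
have [f Ff fyz] : exists2 f, F f & v - n - e < f y - f z.
  apply: alphaS_gt => //; apply: lt_le_trans (g_nonexpansive y z).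
  by apply: lt_le_trans (ominus_ge _ _); lra.
have /andP[fy0 fy1] := F01 Ff y.
exists (fun x => oplus (f x) (1 - f y)); split.
- by apply: cl_shplus (cl_base Ff); apply/andP; split; lra.
- by rewrite /oplus addrC subrK minxx.
- by rewrite ge_min /oplus ge_min; apply/orP; right; apply/orP; left; lra.
Qed.

Lemma separating_function (b c : A) (y x2 : X) (v e : R) :
  finite_set [set ax : A * X | tr x2 ax.1 ax.2] ->
  v <= Num.min (1 - dA b c) (g y) -> 0 < e ->
  exists phi, [/\ cl_meet_shift F phi, phi y = 1
    & Defs.next tr dA b phi x2 <= 1 - (v - Defs.next tr dA c g x2 - e)].
Proof.
move=> fin_x2 vle e0; set n := Defs.next tr dA c g x2.
have /choice[phi phiP] : forall t : A * X, exists phi,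
    [/\ cl_meet_shift F phi, phi y = 1
      & tr x2 t.1 t.2 -> Num.min (1 - dA t.1 b) (phi t.2) <= 1 - (v - n - e)].
  case=> a z; have [trz|ntrz] := pselect (tr x2 a z); last first.
    by exists (fun=> 1); split=> [|//|/ntrz//]; exact: cl_top.
  have [phi [Cphi phiy phiz]] := separating_step vle (le_next c g trz) e0.
  by exists phi.
have [t _|psi [Cpsi psiy psi_le]] :=
    cl_meet_shift_finite_meet (G := F) (phi := phi) (y := y) fin_x2.
  by have [] := phiP t; split.
exists psi; split=> //; apply: next_le => [|a z trz].
  have n0 : 0 <= n by case/andP: (next_fun01 c g x2).
  have dbc := dA_ge0 b c; move: vle; rewrite le_min => /andP[vb _].
  lra.
have [_ _ /(_ trz) phiz] := phiP (a, z).
by apply: le_trans phiz; apply: le_min2 => //; exact: psi_le.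
Qed.

Lemma next_nonexpansive c x1 x2 : fin_branching tr ->
  ominus (Defs.next tr dA c g x1) (Defs.next tr dA c g x2)
  <= alphaS (loS tr dA F) x1 x2.
Proof.
move=> tr_fin; set N1 := Defs.next tr dA c g x1.
set N2 := Defs.next tr dA c g x2; set D := alphaS _ x1 x2.
have D0 : 0 <= D by exact: join01_ge0.
have N2_0 : 0 <= N2 by case/andP: (next_fun01 c g x2).
suff N12 : N1 - N2 <= D by rewrite /ominus ge_max N12 D0.
apply/ler_addgt0Pr => e e0.
have [N1_lt|N1_ge] := ltP (N1 - e / 2) 0; first lra.
have /(next_gt N1_ge)[b [y [trb vN1]]] : N1 - e / 2 < N1 by lra.
set v := Num.min _ _ in vN1.
have [|phi [Cphi phiy phix2]] :=
    separating_function (e := e / 2) (tr_fin x2) (lexx v); first lra.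
have phix1 := le_next b phi trb.
rewrite dA_metric.2.1 subr0 phiy minxx in phix1.
have /(le_trans (ominus_ge _ _)) : ominus (Defs.next tr dA b phi x1)
    (Defs.next tr dA b phi x2) <= D.
  by rewrite /D; apply: le_alphaS; [exact: loS_fun01 | exists b, phi].
by rewrite -/N2 in phix2; lra.
Qed.

End Modality.

Theorem mainTheorem14 (R : realType) (X A : Type)
  (tr : X -> A -> X -> Prop) (dA : A -> A -> R) :
  label_metric dA -> fin_branching tr ->
  forall F : set (X -> R), (forall f, F f -> fun01 f) ->
  loS tr dA (cS F) `<=` cS (loS tr dA F).
Proof.
move=> dA_metric tr_fin F F01 _ [c [g [Cg ->]]].
have alphaS_ge0 x1 x2 : 0 <= alphaS F x1 x2 by exact: join01_ge0.
have [_ g_nonexpansive] := gammaS_cl_meet_shift alphaS_ge0 Cg.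
split=> [|x1 x2]; first exact: next_fun01.
exact: next_nonexpansive.
Qed.
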